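(* Let $\mathcal{G}$ be a weakly reversible reaction network under stochastic mass-action kinetics whose irreducible components are $\Gamma_l=\{x\in\mathbb{Z}^{\mathcal{S}}_{\ge0}\mid\sum_ix_i=l\}$ for $l\in\mathcal{I}=\mathbb{Z}_{\ge m}$. Let $V_{>0}(M_{\mathcal{G}})\subseteq\mathbb{R}^{\mathcal{R}}_{>0}$ be the set of positive rate vectors $\kappa$ for which $(\mathcal{G},\kappa)$ is complex balanced, and let $V_{\mathcal{G},>0}=\mathbb{V}(I)\cap\mathbb{R}^{\mathcal{R}}_{>0}$. Then $\emptyset\neq V_{>0}(M_{\mathcal{G}})\subseteq V_{\mathcal{G},>0}$. Furthermore, if the deficiency of $\mathcal{G}$ is zero, then $V_{>0}(M_{\mathcal{G}})=V_{\mathcal{G},>0}=\mathbb{R}^{\mathcal{R}}_{>0}$.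
   Context: Reaction network $\mathcal{G}=(\mathcal{S},\mathcal{C},\mathcal{R})$, species $S_1,\dots,S_n$, complexes $\nu\in\mathbb{Z}^n_{\ge0}$. Weakly reversible: for every reaction $\nu\to\nu'$ there is a directed path in the reaction graph from $\nu'$ to $\nu$. Deficiency: $|\mathcal{C}|-\ell-\dim\mathcal{T}$ with $\ell$ the number of connected components of the reaction graph and $\mathcal{T}=\mathrm{span}\{\nu'-\nu:\nu\to\nu'\in\mathcal{R}\}$. Stochastic mass-action intensity: $\lambda_{\nu\to\nu'}(x)=\kappa_{\nu\to\nu'}\frac{x!}{(x-\nu)!}\mathbf{1}_{x\ge\nu}$ with $z!=\prod_iz_i!$. $(\mathcal{G},\kappa)$ is complex balanced if there is $c\in\mathbb{R}^n_{>0}$ such that for every complex $\eta$, $\sum_{\nu\to\eta}\kappa_{\nu\to\eta}c^{\nu}=\sum_{\eta\to\nu'}\kappa_{\eta\to\nu'}c^{\eta}$, where $c^\nu=\prod_ic_i^{\nu_i}$. For each $l\in\mathcal{I}$ let $h_l(\kappa)=(h_{l,x}(\kappa))_{x\in\Gamma_l}$ be a vector of polynomials in $\kappa$ such that for all $\kappa>0$ the stationary distribution on $\Gamma_l$ is $h_l(\kappa)$ normalized. $I\subset\mathbb{R}[\kappa]$ is the ideal generated by the polynomials obtained by substituting $\pi_i(x)\mapsto h_{i,x}(\kappa)$ in the differences of both sides of: (a) $\pi_i(x+e_j-e_k)\pi_{i+1}(y)=\pi_{i+1}(y+e_j-e_k)\pi_i(x)$ for $i,i+1\in\mathcal{I}$,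 $x,x+e_j-e_k\in\Gamma_i$, $y,y+e_j-e_k\in\Gamma_{i+1}$, $x_j=y_j,x_k=y_k$; (b) $\pi_{i+1}(x+e_j)\pi_{i+1}(y)\pi_{i+2}(w+e_k)\pi_i(z)=\pi_{i+1}(z+e_k)\pi_{i+1}(w)\pi_{i+2}(y+e_j)\pi_i(x)$ for $i,i+1,i+2\in\mathcal{I}$, $x,z\in\Gamma_i$, $x+e_j,y,z+e_k,w\in\Gamma_{i+1}$, $y+e_j,w+e_k\in\Gamma_{i+2}$, $x_j=y_j$, $z_k=w_k$. $\mathbb{V}(I)$ is its real zero set in $\mathbb{R}^{\mathcal{R}}$. *)

From HB Require Import structures.
From mathcomp Require Import all_boot all_order all_algebra.
From mathcomp Require Import reals.
From mathcomp Require Import mpoly.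
From Stdlib Require Import Relations.

Set Implicit Arguments.
Unset Strict Implicit.
Unset Printing Implicit Defensive.

Import Order.TTheory GRing.Theory Num.Theory.
Local Open Scope ring_scope.

Definition state (n : nat) := {ffun 'I_n -> nat}.

Record crn (n : nat) := CRN {
  ncpx : nat;
  nrxn : nat;
  cpx : 'I_ncpx -> state n;
  src : 'I_nrxn -> 'I_ncpx;
  tgt : 'I_nrxn -> 'I_ncpx;
  cpx_inj : injective cpx;
  cpx_used : forall c, exists k, src k = c \/ tgt k = c;
  rxn_nontriv : forall k, src k <> tgt k;
  rxn_inj : injective (fun k => (src k, tgt k))
}.

Arguments ncpx {n} c : rename.
Arguments nrxn {n} c : rename.
Arguments cpx {n} c _ : rename.
Arguments src {n} c _ : rename.
Arguments tgt {n} c _ : rename.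

Section Network.
Variables (n : nat) (G : crn n).

Definition rgraph_edge : rel 'I_(ncpx G) :=
  fun a b => [exists k, (src G k == a) && (tgt G k == b)].

Definition rgraph_uedge : rel 'I_(ncpx G) :=
  fun a b => rgraph_edge a b || rgraph_edge b a.

Definition weakly_reversible : Prop :=
  forall k, connect rgraph_edge (tgt G k) (src G k).

Definition n_linkage : nat := n_comp (connect rgraph_uedge) predT.

Definition stoich_dim (R : fieldType) : nat :=
  \rank (\matrix_(k < nrxn G, i < n)
          ((cpx G (tgt G k) i)%:R - (cpx G (src G k) i)%:R : R)).

Definition deficiency (R : fieldType) : int :=
  (ncpx G)%:Z - (n_linkage)%:Z - (stoich_dim R)%:Z.

Definition srcv k : state n := cpx G (src G k).
Definition tgtv k : state n := cpx G (tgt G k).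

Definition intensity (R : realType) (kappa : 'I_(nrxn G) -> R) k (x : state n)
  : R :=
  kappa k * (if [forall i, (srcv k i <= x i)%N]
             then \prod_(i < n) (((x i)`!)%:R / ((x i - srcv k i)`!)%:R)
             else 0).

(* one-step transition of the Markov chain (for positive rates):
   reaction k can fire at x (x >= nu_k) and leads to y = x - nu_k + nu'_k *)
Definition step (x y : state n) : Prop :=
  exists k, (forall i, (srcv k i <= x i)%N) /\
            (forall i, (y i + srcv k i = x i + tgtv k i)%N).

Definition reach : relation (state n) := clos_refl_trans _ step.

Definition irreducible_component (Gam : state n -> Prop) : Prop :=
  (exists x, Gam x) /\ forall x, Gam x -> forall y, reach x y <-> Gam y.

Definition Gamma (l : nat) (x : state n) : bool := \sum_(i < n) x i == l.

Definition box_state (l : nat) (f : {ffun 'I_n -> 'I_l.+1}) : state n :=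
  [ffun i => val (f i)].
Definition sum_Gamma (R : realType) (l : nat) (F : state n -> R) : R :=
  \sum_(f : {ffun 'I_n -> 'I_l.+1} | Gamma l (box_state f)) F (box_state f).

(* predecessor state x - nu'_k + nu_k (used only when nu'_k <= x) *)
Definition pre_state k (x : state n) : state n :=
  [ffun i => (x i - tgtv k i + srcv k i)%N].

Definition stationary_on (R : realType) (kappa : 'I_(nrxn G) -> R) (l : nat)
    (pi : state n -> R) : Prop :=
  [/\ forall x, ~~ Gamma l x -> pi x = 0,
      forall x, 0 <= pi x,
      sum_Gamma l pi = 1 &
      forall x, Gamma l x ->
        \sum_(k < nrxn G | [forall i, (tgtv k i <= x i)%N])
           intensity kappa k (pre_state k x) * pi (pre_state k x)
        = pi x * \sum_(k < nrxn G) intensity kappa k x].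

Definition positive (R : realType) (kappa : 'I_(nrxn G) -> R) : Prop :=
  forall k, 0 < kappa k.

Definition monom (R : realType) (c : 'I_n -> R) (nu : state n) : R :=
  \prod_(i < n) c i ^+ nu i.

Definition complex_balanced (R : realType) (kappa : 'I_(nrxn G) -> R) : Prop :=
  exists c : 'I_n -> R, (forall i, 0 < c i) /\
    forall eta : 'I_(ncpx G),
      \sum_(k < nrxn G | tgt G k == eta) kappa k * monom c (srcv k)
      = \sum_(k < nrxn G | src G k == eta) kappa k * monom c (cpx G eta).

Definition V_cb_pos (R : realType) (kappa : 'I_(nrxn G) -> R) : Prop :=
  positive kappa /\ complex_balanced kappa.

Definition add_e (x : state n) (j : 'I_n) : state n := [ffun i => (x i + (i == j))%N].

(* Generators of the ideal I, given the polynomial vectors h (h l x = h_{l,x}),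
   for the index set I = Z_{>= m}.  [x' = x + e_j - e_k] is expressed
   exactly (without truncated subtraction) as  x' + e_k = x + e_j. *)
Definition ideal_gen (R : realType) (m : nat)
    (h : nat -> state n -> {mpoly R[nrxn G]}) (p : {mpoly R[nrxn G]}) : Prop :=
  (exists (i : nat) (j k : 'I_n) (x x' y y' : state n),
     [/\ (m <= i)%N,
         add_e x' k = add_e x j /\ add_e y' k = add_e y j,
         [/\ Gamma i x, Gamma i x', Gamma i.+1 y & Gamma i.+1 y'],
         x j = y j /\ x k = y k &
         p = h i x' * h i.+1 y - h i.+1 y' * h i x])
  \/
  (exists (i : nat) (j k : 'I_n) (x y z w : state n),
     [/\ (m <= i)%N,
         [/\ Gamma i x, Gamma i z, Gamma i.+1 (add_e x j), Gamma i.+1 y &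
             Gamma i.+1 (add_e z k) /\ Gamma i.+1 w],
         Gamma i.+2 (add_e y j) /\ Gamma i.+2 (add_e w k),
         x j = y j /\ z k = w k &
         p = h i.+1 (add_e x j) * h i.+1 y * h i.+2 (add_e w k) * h i z
           - h i.+1 (add_e z k) * h i.+1 w * h i.+2 (add_e y j) * h i x]).

Definition in_ideal (R : realType) (m : nat)
    (h : nat -> state n -> {mpoly R[nrxn G]}) (p : {mpoly R[nrxn G]}) : Prop :=
  exists s : seq ({mpoly R[nrxn G]} * {mpoly R[nrxn G]}),
    (forall t, t \in s -> ideal_gen m h t.2) /\
    p = \sum_(t <- s) t.1 * t.2.

Definition V_ideal (R : realType) (m : nat)
    (h : nat -> state n -> {mpoly R[nrxn G]}) (kappa : 'I_(nrxn G) -> R) : Prop :=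
  forall p, in_ideal m h p -> p.@[kappa] = 0.

Definition V_G_pos (R : realType) (m : nat)
    (h : nat -> state n -> {mpoly R[nrxn G]}) (kappa : 'I_(nrxn G) -> R) : Prop :=
  V_ideal m h kappa /\ positive kappa.

End Network.

(* For complex balanced rates with equilibrium c, the Poisson product form
   x |-> prod_i c_i^x_i / x_i! solves the stationary master equation on every
   Gamma_l, and on an irreducible class such a solution is unique up to a
   scalar (maximum principle for the ratio of two solutions).  Hence h_l(kappa)
   is proportional to the product form, on which every generator of I vanishes.
   Weak reversibility gives, for any positive rates, a positive balanced vector
   b on the complexes (a positive kernel vector of the transposed Laplacian);
   for unit rates, kappa_k = b(src k) is complex balanced with c = 1.  With
   deficiency zero, log b = Y u + g with g constant on linkage classes, so
   c = exp u is a complex balanced equilibrium for every positive kappa. *)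

From HB Require Import structures.
From mathcomp Require Import all_boot all_order all_algebra.
From mathcomp Require Import reals.
From mathcomp Require Import mpoly.
From mathcomp Require Import sequences exp.
From mathcomp Require Import zify.
From mathcomp.algebra_tactics Require Import ring.
From Stdlib Require Import Relations.

Set Implicit Arguments.
Unset Strict Implicit.
Unset Printing Implicit Defensive.

Import Order.TTheory GRing.Theory Num.Theory.
Local Open Scope ring_scope.

Lemma sum_delta (R : pzSemiRingType) (T : finType) (f : T -> R) (t : T) :
  \sum_u (u == t)%:R * f u = f t.
Proof.
rewrite (bigD1 t) //= eqxx mul1r big1 ?addr0 // => u /negPf ->.
exact: mul0r.
Qed.

Lemma left_kernel_neq0 (F : fieldType) m (M : 'M[F]_m) (u : 'cV_m) :
  u != 0 -> M *m u = 0 -> exists2 v : 'rV_m, v != 0 & v *m M = 0.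
Proof.
move=> u_neq0 Mu0; exists (nz_row (kermx M)).
  rewrite nz_row_eq0 -mxrank_eq0 mxrank_ker subn_eq0 -ltnNge.
  by have := mulmx0_rank_max Mu0; rewrite -mxrank_eq0 in u_neq0; lia.
by apply/eqP; rewrite -sub_kermx nz_row_sub.
Qed.

Section ProductForm.
Variables (R : realType) (n : nat) (G : crn n).

Definition poisson_weight (a : R) (e : nat) : R := a ^+ e / (e`!)%:R.

Definition product_form (c : 'I_n -> R) (x : state n) : R :=
  \prod_i poisson_weight (c i) (x i).

Definition product_form_on (c : 'I_n -> R) (l : nat) (x : state n) : R :=
  if Gamma l x then product_form c x else 0.

Definition global_balance (kappa : 'I_(nrxn G) -> R) (p : state n -> R)
    (x : state n) : Prop :=
  \sum_(k < nrxn G | [forall i, (tgtv k i <= x i)%N])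
     intensity kappa k (pre_state k x) * p (pre_state k x)
  = p x * \sum_(k < nrxn G) intensity kappa k x.

Definition complex_balanced_at (kappa : 'I_(nrxn G) -> R) (c : 'I_n -> R) :=
  forall eta : 'I_(ncpx G),
    \sum_(k < nrxn G | tgt G k == eta) kappa k * monom c (srcv k)
    = \sum_(k < nrxn G | src G k == eta) kappa k * monom c (cpx G eta).

Definition mass_conserving : Prop :=
  forall k, (\sum_i srcv (G:=G) k i = \sum_i tgtv (G:=G) k i)%N.

Lemma natr_fact_neq0 (e : nat) : (e`!)%:R != 0 :> R.
Proof. by rewrite pnatr_eq0 -lt0n fact_gt0. Qed.

Lemma poisson_weight_gt0 a e : 0 < a -> 0 < poisson_weight a e.
Proof. by move=> a0; rewrite divr_gt0 ?exprn_gt0 // ltr0n fact_gt0. Qed.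

Lemma product_form_gt0 c x : (forall i, 0 < c i) -> 0 < product_form c x.
Proof. by move=> c0; apply: prodr_gt0 => i _; exact: poisson_weight_gt0. Qed.

Lemma poisson_weightD (a : R) (e b : nat) :
  ((e + b)`!)%:R / (e`!)%:R * poisson_weight a (e + b) = a ^+ b * poisson_weight a e.
Proof.
rewrite /poisson_weight exprD.
have := natr_fact_neq0 (e + b); have := natr_fact_neq0 e.
by move=> ? ?; field; apply/andP.
Qed.

Lemma poisson_weightB (a : R) (e b : nat) : (b <= e)%N ->
  (e`!)%:R / ((e - b)`!)%:R * poisson_weight a e = a ^+ b * poisson_weight a (e - b).
Proof. by move=> be; have := poisson_weightD a (e - b) b; rewrite subnK. Qed.

Lemma mass_conserving_of_irreducible_Gamma m :
  (forall l, (m <= l)%N -> irreducible_component G (fun x => Gamma l x)) ->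
  mass_conserving.
Proof.
move=> irrGamma k.
case: (pickP (fun _ : 'I_n => true)) => [i0 _|no_species]; last first.
  by rewrite !big1 // => i; have := no_species i.
pose pad (nu : state n) : state n := [ffun i => (nu i + (i == i0) * m)%N].
have sum_pad nu : (\sum_i pad nu i = \sum_i nu i + m)%N.
  under eq_bigr do rewrite ffunE.
  rewrite big_split /=; congr (_ + _)%N.
  by rewrite (bigD1 i0) //= eqxx mul1n big1 ?addn0 // => i /negPf ->.
have [_ closedGamma] := irrGamma (\sum_i srcv k i + m)%N (leq_addl _ _).
have Gsrc : Gamma (\sum_i srcv k i + m) (pad (srcv k)) by rewrite /Gamma sum_pad.
have : Gamma (\sum_i srcv k i + m) (pad (tgtv k)).
  apply/(closedGamma _ Gsrc)/rt_step; exists k; split => i; rewrite !ffunE; lia.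
by rewrite /Gamma sum_pad eqn_add2r => /eqP.
Qed.

Lemma Gamma_pre_state l (k : 'I_(nrxn G)) (x : state n) : mass_conserving ->
  [forall i, (tgtv k i <= x i)%N] -> Gamma l (pre_state k x) = Gamma l x.
Proof.
move=> mc /forallP le_tgt_x; rewrite /Gamma; congr (_ == l).
apply: (@addIn (\sum_i tgtv k i)%N); rewrite -{2}(mc k) -!big_split /=.
by apply: eq_bigr => i _; rewrite ffunE; have := le_tgt_x i; lia.
Qed.

Variable kappa : 'I_(nrxn G) -> R.

Definition shifted_form (c : 'I_n -> R) (x z : state n) : R :=
  if [forall i, (z i <= x i)%N] then \prod_i poisson_weight (c i) (x i - z i)
  else 0.

Lemma inflow_product_form c l x k : mass_conserving -> Gamma l x ->
    [forall i, (tgtv k i <= x i)%N] ->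
  intensity kappa k (pre_state k x) * product_form_on c l (pre_state k x)
  = kappa k * monom c (srcv k) * shifted_form c x (tgtv k).
Proof.
move=> mc Gx le_tgt_x.
rewrite /product_form_on Gamma_pre_state // Gx /intensity /shifted_form le_tgt_x.
have -> : [forall i, (srcv k i <= pre_state k x i)%N].
  by apply/forallP => i; rewrite ffunE leq_addl.
rewrite -!mulrA; congr (_ * _); rewrite -!big_split /=; apply: eq_bigr => i _.
by rewrite ffunE addnK poisson_weightD.
Qed.

Lemma outflow_product_form c x k :
  intensity kappa k x * product_form c x
  = kappa k * monom c (srcv k) * shifted_form c x (srcv k).
Proof.
rewrite /intensity /shifted_form; case: ifP => [/forallP le_src_x|_].
  rewrite -!mulrA; congr (_ * _); rewrite -!big_split /=.
  by apply: eq_bigr => i _; rewrite poisson_weightB ?le_src_x.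
by rewrite !mulr0 mul0r.
Qed.

(* Both sides of the master equation regroup by complex: a reaction into or
   out of the complex z contributes kappa_k c^(src k) times the weight of x - z. *)
Lemma product_form_global_balance c l x :
  mass_conserving -> complex_balanced_at kappa c -> Gamma l x ->
  global_balance kappa (product_form_on c l) x.
Proof.
move=> mc cb Gx; rewrite /global_balance {2}/product_form_on Gx mulr_sumr.
transitivity (\sum_k shifted_form c x (tgtv k) * (kappa k * monom c (srcv k))).
  rewrite big_mkcond /=; apply: eq_bigr => k _.
  case: ifP => [le_tgt_x|gt_tgt_x]; first by rewrite inflow_product_form // mulrC.
  by rewrite /shifted_form gt_tgt_x mul0r.
under [RHS]eq_bigr do rewrite mulrC outflow_product_form mulrC.
rewrite (partition_big (tgt G) predT) //= [RHS](partition_big (src G) predT) //=.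
apply: eq_bigr => eta _.
transitivity (shifted_form c x (cpx G eta) *
              \sum_(k | tgt G k == eta) kappa k * monom c (srcv k)).
  by rewrite mulr_sumr; apply: eq_bigr => k /eqP <-.
by rewrite cb mulr_sumr; apply: eq_bigr => k /eqP <-.
Qed.

End ProductForm.

Section StationaryUniqueness.
Variables (R : realType) (n : nat) (G : crn n) (kappa : 'I_(nrxn G) -> R).
Hypothesis kappa_pos : positive kappa.

Lemma intensity_ge0 k (x : state n) : 0 <= intensity kappa k x.
Proof.
rewrite /intensity mulr_ge0 ?(ltW (kappa_pos k)) //; case: ifP => // _.
by apply: prodr_ge0 => i _; rewrite divr_ge0.
Qed.

Lemma intensity_gt0 k (x : state n) :
  (forall i, srcv k i <= x i)%N -> 0 < intensity kappa k x.
Proof.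
move=> /forallP le_src_x; rewrite /intensity le_src_x mulr_gt0 //.
by apply: prodr_gt0 => i _; rewrite divr_gt0 // ltr0n fact_gt0.
Qed.

Lemma step_pre_state (a b : state n) : step G a b ->
  exists2 k : 'I_(nrxn G), [forall i, (tgtv k i <= b i)%N] & pre_state k b = a.
Proof.
case=> k [le_src_a fire]; exists k.
  by apply/forallP => i; have := le_src_a i; have := fire i; lia.
apply/ffunP => i; rewrite ffunE; have := le_src_a i; have := fire i.
by move: (a i) (b i) (srcv k i) (tgtv k i); lia.
Qed.

Lemma Gamma_argmax l (F : state n -> R) (x0 : state n) : Gamma l x0 ->
  exists2 xm, Gamma l xm & forall x, Gamma l x -> F x <= F xm.
Proof.
pose box (x : state n) : {ffun 'I_n -> 'I_l.+1} := [ffun i => inord (x i)].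
have boxK x : Gamma l x -> box_state (box x) = x.
  move=> /eqP Gx; apply/ffunP => i; rewrite /box_state !ffunE /= inordK // ltnS -Gx.
  by rewrite (bigD1 i) //= leq_addr.
move=> Gx0; have Gbox0 : Gamma l (box_state (box x0)) by rewrite boxK.
case: (@arg_maxP _ R _ (box x0) (fun f => Gamma l (box_state f))
        (fun f => F (box_state f)) Gbox0) => fm Gfm max_fm.
exists (box_state fm) => // x Gx; rewrite -(boxK x Gx); apply: max_fm.
by rewrite boxK.
Qed.

(* The master equation at z exhibits r z as a weighted average of r over the
   predecessors of z, so a maximal value of r is attained at all of them. *)
Lemma ratio_max_pre_state (pi p r : state n -> R) (M : R) (z : state n)
    (k : 'I_(nrxn G)) :
  (forall x, pi x = r x * p x) -> (forall x, 0 <= p x) ->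
  (forall x, 0 < p x -> r x <= M) ->
  global_balance kappa pi z -> global_balance kappa p z -> r z = M ->
  [forall i, (tgtv k i <= z i)%N] -> 0 < p (pre_state k z) ->
  r (pre_state k z) = M.
Proof.
move=> piE p_ge0 r_le_M bal_pi bal_p rzM le_tgt_z p_pre_gt0.
pose P (j : 'I_(nrxn G)) := [forall i, (tgtv j i <= z i)%N].
pose w j := intensity kappa j (pre_state j z).
pose T j := w j * p (pre_state j z) * (M - r (pre_state j z)).
have T_ge0 j : P j -> 0 <= T j.
  move=> _; have [p_pre0|p_pre_neq0] := eqVneq (p (pre_state j z)) 0.
    by rewrite /T p_pre0 mulr0 mul0r.
  apply: mulr_ge0; first exact: mulr_ge0 (intensity_ge0 _ _) (p_ge0 _).
  by rewrite subr_ge0 r_le_M // lt0r p_pre_neq0 p_ge0.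
have sumT : \sum_(j | P j) T j = 0.
  transitivity (M * \sum_(j | P j) w j * p (pre_state j z)
                - \sum_(j | P j) w j * pi (pre_state j z)).
    by rewrite mulr_sumr -sumrB; apply: eq_bigr => j _; rewrite /T piE; ring.
  by rewrite [X in M * X]bal_p [X in _ - X]bal_pi piE rzM; ring.
have int_gt0 : 0 < intensity kappa k (pre_state k z).
  by apply: intensity_gt0 => i; rewrite ffunE leq_addl.
move/eqP: (psumr_eq0P T_ge0 sumT le_tgt_z).
rewrite /T mulf_eq0 subr_eq0 => /orP[|/eqP //].
by rewrite mulf_eq0 (gt_eqF int_gt0) (gt_eqF p_pre_gt0).
Qed.

Lemma global_balance_proportional l (pi p : state n -> R) :
  irreducible_component G (fun x => Gamma l x) ->
  (forall x, ~~ Gamma l x -> pi x = 0) -> (forall x, ~~ Gamma l x -> p x = 0) ->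
  (forall x, Gamma l x -> 0 < p x) ->
  (forall x, Gamma l x -> global_balance kappa pi x) ->
  (forall x, Gamma l x -> global_balance kappa p x) ->
  exists r0, forall x, Gamma l x -> pi x = r0 * p x.
Proof.
move=> [[x0 Gx0] closedGamma] pi0 p0 p_gt0 bal_pi bal_p.
pose r x := pi x / p x.
have piE x : pi x = r x * p x.
  have [Gx|nGx] := boolP (Gamma l x); first by rewrite divfK // gt_eqF ?p_gt0.
  by rewrite pi0 // p0 // mulr0.
have p_ge0 x : 0 <= p x.
  by have [/p_gt0/ltW|/p0->] := boolP (Gamma l x).
have Gp x : 0 < p x -> Gamma l x.
  by apply: contraTT => /p0->; rewrite ltxx.
have [xm Gxm r_le] := Gamma_argmax r Gx0.
have rmax : forall a b, reach G a b -> Gamma l a -> r b = r xm -> r a = r xm.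
  move=> a b; elim=> {a b} [a b ab|//|a b c ab IHab _ IHbc] Ga r_end.
    have [k le_tgt_b pre_b] := step_pre_state ab.
    have Gb : Gamma l b by apply/(closedGamma a Ga); exact: rt_step.
    rewrite -pre_b; apply: (ratio_max_pre_state piE p_ge0) r_end le_tgt_b _.
    - by move=> x /Gp; exact: r_le.
    - exact: bal_pi.
    - exact: bal_p.
    - by rewrite pre_b p_gt0.
  by apply: IHab => //; apply: IHbc r_end; exact/(closedGamma a Ga b).
exists (r xm) => x Gx; rewrite piE (rmax x xm) //; exact/(closedGamma x Gx).
Qed.

End StationaryUniqueness.

Section IdealVanishing.
Variables (R : realType) (n : nat) (G : crn n).

Lemma stationary_product_form (kappa : 'I_(nrxn G) -> R) c l pi :
  positive kappa -> mass_conserving G -> complex_balanced_at kappa c ->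
  (forall i, 0 < c i) -> irreducible_component G (fun x => Gamma l x) ->
  stationary_on kappa l pi ->
  exists r0, forall x, Gamma l x -> pi x = r0 * product_form c x.
Proof.
move=> kappa_pos mc cb c_pos irr_l [pi0 _ _ bal_pi].
have [|||r0 pi_r0] := global_balance_proportional (p := product_form_on c l)
  kappa_pos irr_l pi0 _ _ bal_pi.
- by move=> x /negPf nGx; rewrite /product_form_on nGx.
- by move=> x Gx; rewrite /product_form_on Gx product_form_gt0.
- by move=> x; exact: product_form_global_balance.
by exists r0 => x Gx; rewrite pi_r0 // /product_form_on Gx.
Qed.

Lemma normalized_product_form (kappa : 'I_(nrxn G) -> R) c l (q : state n -> R) :
  positive kappa -> mass_conserving G -> complex_balanced_at kappa c ->
  (forall i, 0 < c i) -> irreducible_component G (fun x => Gamma l x) ->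
  stationary_on kappa l (fun x => q x / sum_Gamma l q) ->
  exists C, forall x, Gamma l x -> q x = C * product_form c x.
Proof.
move=> kappa_pos mc cb c_pos irr_l stat.
have [r0 q_r0] := stationary_product_form kappa_pos mc cb c_pos irr_l stat.
have Z_neq0 : sum_Gamma l q != 0.
  apply: contra_eq_neq (let: And4 _ _ sum1 _ := stat in sum1) => Z0.
  rewrite Z0 /sum_Gamma big1 => [|f _]; first by rewrite eq_sym oner_neq0.
  by rewrite invr0 mulr0.
exists (sum_Gamma l q * r0) => x Gx.
by rewrite -mulrA -q_r0 // mulrC divfK.
Qed.

Lemma coord_add_e_cases (a a' b b' : nat) (dj dk : bool) :
  (a' + dk = a + dj)%N -> (b' + dk = b + dj)%N -> (dj || dk -> a = b) ->
  (a' = a /\ b' = b) \/ (a' = b' /\ a = b).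
Proof. by case: dj dk => [] [] /=; lia. Qed.

Lemma product_form_relation_a (c : 'I_n -> R) (x x' y y' : state n) j k :
  add_e x' k = add_e x j -> add_e y' k = add_e y j -> x j = y j -> x k = y k ->
  product_form c x' * product_form c y = product_form c y' * product_form c x.
Proof.
move=> Ex Ey xyj xyk; rewrite /product_form -!big_split /=; apply: eq_bigr => t _.
have := congr1 (fun f : state n => f t) Ex.
have := congr1 (fun f : state n => f t) Ey; rewrite !ffunE => ey ex.
have xyt : (t == j) || (t == k) -> x t = y t by case/orP => /eqP ->.
by case: (coord_add_e_cases ex ey xyt) => [[-> ->]|[-> ->]]; rewrite // mulrC.
Qed.

Lemma product_form_relation_b (c : 'I_n -> R) (x y z w : state n) j k :
  x j = y j -> z k = w k ->
  product_form c (add_e x j) * product_form c y * product_form c (add_e w k)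
    * product_form c z
  = product_form c (add_e z k) * product_form c w * product_form c (add_e y j)
    * product_form c x.
Proof.
move=> xyj zwk; rewrite /product_form -!big_split /=; apply: eq_bigr => t _.
rewrite !ffunE.
have xyt : t == j -> x t = y t by move=> /eqP ->.
have zwt : t == k -> z t = w t by move=> /eqP ->.
case: (t == j) xyt => [/(_ isT) ->|_]; case: (t == k) zwt => [/(_ isT) ->|_];
  by rewrite /= ?addn0 ?addn1; ring.
Qed.

Lemma ideal_gen_vanish m (h : nat -> state n -> {mpoly R[nrxn G]}) kappa
    (c : 'I_n -> R) :
  (forall l, (m <= l)%N ->
     exists C, forall x, Gamma l x -> (h l x).@[kappa] = C * product_form c x) ->
  forall p, ideal_gen m h p -> p.@[kappa] = 0.
Proof.
move=> hC p [[i [j [k [x [x' [y [y' [mi [Ex Ey] [Gx Gx' Gy Gy'] [xyj xyk] ->]]]]]]]]|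
  [i [j [k [x [y [z [w [mi [Gx Gz Gxj Gy [Gzk Gw]] [Gyj Gwk] [xyj zwk] ->]]]]]]]]].
- have [C0 hC0] := hC i mi; have [C1 hC1] := hC i.+1 (leqW mi).
  rewrite mevalB !mevalM hC0 // hC1 // hC1 // hC0 //.
  transitivity (C0 * C1 * (product_form c x' * product_form c y)
                - C0 * C1 * (product_form c y' * product_form c x)); first by ring.
  by rewrite (product_form_relation_a c Ex Ey xyj xyk) subrr.
- have [C0 hC0] := hC i mi; have [C1 hC1] := hC i.+1 (leqW mi).
  have [C2 hC2] := hC i.+2 (leqW (leqW mi)).
  rewrite mevalB !mevalM hC0 // hC0 // hC1 // hC1 // hC1 // hC1 // hC2 // hC2 //.
  set C := C1 * C1 * C2 * C0.
  transitivity (C * (product_form c (add_e x j) * product_form c y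
                     * product_form c (add_e w k) * product_form c z)
                - C * (product_form c (add_e z k) * product_form c w
                       * product_form c (add_e y j) * product_form c x)).
    by rewrite /C; ring.
  by rewrite (product_form_relation_b c xyj zwk) subrr.
Qed.

Lemma V_ideal_of_gens m (h : nat -> state n -> {mpoly R[nrxn G]}) kappa :
  (forall p, ideal_gen m h p -> p.@[kappa] = 0) -> V_ideal m h kappa.
Proof.
move=> gen0 p [s [s_gen ->]]; rewrite raddf_sum /= big1_seq // => t /s_gen t_gen.
by rewrite mevalM (gen0 _ t_gen) mulr0.
Qed.

End IdealVanishing.

Lemma V_cb_pos_sub_V_G_pos (R : realType) n (G : crn n) m
    (h : nat -> state n -> {mpoly R[nrxn G]}) :
  (forall l, (m <= l)%N -> irreducible_component G (fun x => Gamma l x)) ->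
  (forall kappa : 'I_(nrxn G) -> R, positive kappa ->
     forall l, (m <= l)%N ->
       stationary_on kappa l
         (fun x => (h l x).@[kappa] / sum_Gamma l (fun y => (h l y).@[kappa]))) ->
  forall kappa, V_cb_pos kappa -> V_G_pos m h kappa.
Proof.
move=> irrGamma stat_h kappa [kappa_pos [c [c_pos cb]]]; split => //.
apply/V_ideal_of_gens/(ideal_gen_vanish (c := c)) => l ml.
have mc := mass_conserving_of_irreducible_Gamma irrGamma.
exact: normalized_product_form kappa_pos mc cb c_pos (irrGamma l ml)
  (stat_h kappa kappa_pos l ml).
Qed.

Section ReactionGraph.
Variables (n : nat) (G : crn n).
Local Notation linked := (connect (rgraph_uedge (G:=G))).

Lemma linked_sym : connect_sym (rgraph_uedge (G:=G)).
Proof. by apply: sym_connect_sym => a b; rewrite /rgraph_uedge orbC. Qed.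

Lemma linked_src_tgt a k : linked a (src G k) = linked a (tgt G k).
Proof.
have src_tgt : linked (src G k) (tgt G k).
  by apply/connect1/orP; left; apply/existsP; exists k; rewrite !eqxx.
apply/idP/idP => [|a_tgt]; first by move/connect_trans; apply.
by apply: connect_trans a_tgt _; rewrite linked_sym.
Qed.

Lemma weakly_reversible_linked : weakly_reversible G ->
  forall a b, linked a b -> connect (rgraph_edge (G:=G)) a b.
Proof.
move=> wr; apply: connect_sub => a b /orP[ab|/existsP[k /andP[/eqP <- /eqP <-]]].
  exact: connect1.
exact: wr.
Qed.

End ReactionGraph.

Section BalancedVectors.
Variables (R : realType) (n : nat) (G : crn n) (kappa : 'I_(nrxn G) -> R).
Hypothesis kappa_pos : positive kappa.
Local Notation C := (ncpx G).
Local Notation linked := (connect (rgraph_uedge (G:=G))).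

Definition inflow (v : 'I_C -> R) (eta : 'I_C) : R :=
  \sum_(k | tgt G k == eta) kappa k * v (src G k).

Definition outflow_rate (eta : 'I_C) : R := \sum_(k | src G k == eta) kappa k.

Definition balanced (v : 'I_C -> R) : Prop :=
  forall eta, inflow v eta = v eta * outflow_rate eta.

Lemma outflow_rate_ge0 eta : 0 <= outflow_rate eta.
Proof. by apply: sumr_ge0 => k _; exact: ltW. Qed.

Lemma balanced_sum (I : finType) (F : I -> 'I_C -> R) :
  (forall i, balanced (F i)) -> balanced (fun eta => \sum_i F i eta).
Proof.
move=> bal_F eta; rewrite /inflow mulr_suml.
under eq_bigr do rewrite mulr_sumr; rewrite exchange_big /=.
by apply: eq_bigr => i _; exact: bal_F.
Qed.

Lemma sum_inflow v : \sum_eta inflow v eta = \sum_eta v eta * outflow_rate eta.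
Proof.
transitivity (\sum_k kappa k * v (src G k)).
  by rewrite [RHS](partition_big (tgt G) predT).
rewrite (partition_big (src G) predT) //=; apply: eq_bigr => eta _.
rewrite /outflow_rate mulr_sumr.
by apply: eq_bigr => k /eqP <-; rewrite mulrC.
Qed.

(* Pointwise, the triangle inequality gives |v| out <= inflow |v|; summing
   over all complexes both sides agree, so equality holds everywhere. *)
Lemma balanced_norm v : balanced v -> balanced (fun eta => `|v eta|).
Proof.
move=> bal_v.
have le_in eta : `|v eta| * outflow_rate eta <= inflow (fun x => `|v x|) eta.
  rewrite -(ger0_norm (outflow_rate_ge0 eta)) -normrM -bal_v.
  apply: le_trans (ler_norm_sum _ _ _) _; apply: ler_sum => k _.
  by rewrite normrM gtr0_norm.
have gap0 : \sum_eta (inflow (fun x => `|v x|) eta - `|v eta| * outflow_rate eta) = 0.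
  by rewrite sumrB sum_inflow subrr.
move=> eta; apply/eqP; rewrite -subr_eq0; apply/eqP.
by apply: (psumr_eq0P _ gap0) => // zeta _; rewrite subr_ge0.
Qed.

Lemma balanced_gt0_edge b : balanced b -> (forall x, 0 <= b x) ->
  forall x y, rgraph_edge x y -> 0 < b x -> 0 < b y.
Proof.
move=> bal_b b_ge0 x y /existsP[k /andP[/eqP src_k /eqP tgt_k]] bx_gt0.
have : 0 < inflow b y.
  rewrite /inflow (bigD1 k) ?tgt_k // src_k; apply: ltr_wpDr; last first.
    by rewrite mulr_gt0.
  by apply: sumr_ge0 => j _; exact: mulr_ge0 (ltW (kappa_pos j)) (b_ge0 _).
rewrite bal_b => prod_gt0; rewrite lt0r b_ge0 andbT.
by apply: contraTneq prod_gt0 => ->; rewrite mul0r ltxx.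
Qed.

Lemma balanced_gt0_connect b : balanced b -> (forall x, 0 <= b x) ->
  forall x y, connect (rgraph_edge (G:=G)) x y -> 0 < b x -> 0 < b y.
Proof.
move=> bal_b b_ge0 x y /connectP[p + ->]; elim: p x => [//|z p IHp] x /= /andP[xz zp].
by move=> bx_gt0; apply: IHp zp _; exact: balanced_gt0_edge xz bx_gt0.
Qed.

Section LinkageClass.
Variable a : 'I_C.

(* The Laplacian of the linkage class of [a], padded with [-1] on the diagonal
   outside it, so that its left kernel consists of balanced vectors supported
   on that class. *)
Definition linkage_laplacian : 'M[R]_C := \matrix_(eta, zeta)
  ((linked a eta)%:R * \sum_(k | (src G k == eta) && (tgt G k == zeta)) kappa k
   - (eta == zeta)%:R * (if linked a eta then outflow_rate eta else 1)).

Lemma linkage_laplacian_indicator :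
  linkage_laplacian *m \col_eta (linked a eta)%:R = 0.
Proof.
apply/matrixP => eta i; rewrite !mxE; under eq_bigr do rewrite !mxE mulrBl.
rewrite sumrB; under [X in _ - X]eq_bigr do rewrite eq_sym -mulrA.
rewrite sum_delta; have [a_eta|_] := boolP (linked a eta); last first.
  by rewrite big1 ?mulr0 ?subrr // => zeta _; rewrite !mul0r.
rewrite mulr1 /outflow_rate (partition_big (tgt G) predT) //=.
apply/eqP; rewrite subr_eq0; apply/eqP; apply: eq_bigr => zeta _.
rewrite mul1r mulr_suml; apply: eq_bigr => k /andP[/eqP src_k /eqP <-].
by rewrite -linked_src_tgt src_k a_eta mulr1.
Qed.

Lemma linkage_laplacian_mulmx (v : 'rV_C) zeta :
  (v *m linkage_laplacian) 0 zeta
  = (linked a zeta)%:R * inflow (v 0) zeta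
    - v 0 zeta * (if linked a zeta then outflow_rate zeta else 1).
Proof.
rewrite !mxE; under eq_bigr do rewrite !mxE mulrBr.
rewrite sumrB; under [X in _ - X]eq_bigr do rewrite mulrCA.
rewrite sum_delta; congr (_ - _).
rewrite /inflow mulr_sumr (partition_big (src G) predT) //=.
apply: eq_bigr => eta _; rewrite mulrCA !mulr_sumr.
apply: eq_big => [k|k /andP[/eqP src_k /eqP tgt_k]]; first exact: andbC.
by rewrite -tgt_k -linked_src_tgt src_k; ring.
Qed.

Lemma balanced_of_linkage_laplacian (v : 'rV_C) :
  v *m linkage_laplacian = 0 ->
  (forall eta, ~~ linked a eta -> v 0 eta = 0) /\ balanced (v 0).
Proof.
move=> vM0.
have vM0_at zeta : (linked a zeta)%:R * inflow (v 0) zeta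
                   = v 0 zeta * (if linked a zeta then outflow_rate zeta else 1).
  by apply/eqP; rewrite -subr_eq0 -linkage_laplacian_mulmx vM0 mxE.
have v_out eta : ~~ linked a eta -> v 0 eta = 0.
  by move=> /negPf a_eta; have := vM0_at eta; rewrite a_eta mul0r mulr1 => /esym.
split=> // zeta; have [a_zeta|not_a_zeta] := boolP (linked a zeta).
  by have := vM0_at zeta; rewrite a_zeta mul1r.
rewrite v_out // mul0r /inflow big1 // => k /eqP tgt_k.
by rewrite v_out ?mulr0 // linked_src_tgt tgt_k.
Qed.

Lemma linkage_class_balanced : weakly_reversible G ->
  exists v, [/\ balanced v, forall eta, 0 <= v eta & 0 < v a].
Proof.
move=> wr.
have u_neq0 : \col_eta (linked a eta)%:R != 0 :> 'cV[R]_C.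
  by apply/eqP => /matrixP/(_ a 0); rewrite !mxE connect0 => /eqP; rewrite oner_eq0.
have [v /rV0Pn[z vz_neq0] vM0] := left_kernel_neq0 u_neq0 linkage_laplacian_indicator.
have [v_out bal_v] := balanced_of_linkage_laplacian vM0.
have a_z : linked a z by apply: contraNT vz_neq0 => /v_out ->.
have z_to_a : connect (rgraph_edge (G:=G)) z a.
  by apply: weakly_reversible_linked; rewrite // linked_sym.
have vz_gt0 : 0 < `|v 0 z| by rewrite normr_gt0.
exists (fun eta => `|v 0 eta|); split=> [|eta|]; first exact: balanced_norm.
  exact: normr_ge0.
exact: balanced_gt0_connect (balanced_norm bal_v) (fun eta => normr_ge0 _) _ _
  z_to_a vz_gt0.
Qed.

End LinkageClass.

Lemma weakly_reversible_balanced_gt0 : weakly_reversible G ->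
  exists2 b, forall eta, 0 < b eta & balanced b.
Proof.
move=> wr; have /fin_all_exists[v v_spec] := linkage_class_balanced ^~ wr.
exists (fun eta => \sum_a v a eta); last by apply: balanced_sum => a; case: (v_spec a).
move=> eta; rewrite (bigD1 eta) //= ltr_wpDr //; last by case: (v_spec eta).
by apply: sumr_ge0 => a _; case: (v_spec a).
Qed.

End BalancedVectors.

Section DeficiencyZeroDecomposition.
Variables (F : fieldType) (n : nat) (G : crn n).
Local Notation C := (ncpx G).
Local Notation L := (n_linkage G).
Local Notation linked := (connect (rgraph_uedge (G:=G))).

Definition complex_matrix : 'M[F]_(C, n) := \matrix_(eta, i) (cpx G eta i)%:R.

Definition incidence_matrix : 'M[F]_(nrxn G, C) :=
  \matrix_(k, eta) ((eta == tgt G k)%:R - (eta == src G k)%:R).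

(* [enum_val j] ranges over the roots of the linkage classes, which
   [n_linkage] counts. *)
Definition linkage_matrix : 'M[F]_(C, L) :=
  \matrix_(eta, j) (linked (enum_val j) eta)%:R.

Lemma stoich_dim_incidence :
  stoich_dim G F = \rank (incidence_matrix *m complex_matrix).
Proof.
rewrite /stoich_dim; congr (\rank _); apply/matrixP => k i; rewrite !mxE.
under [RHS]eq_bigr do rewrite !mxE mulrBl.
by rewrite sumrB !sum_delta.
Qed.

Lemma incidence_linkage_matrix : incidence_matrix *m linkage_matrix = 0.
Proof.
apply/matrixP => k j; rewrite !mxE; under eq_bigr do rewrite !mxE mulrBl.
by rewrite sumrB !sum_delta linked_src_tgt subrr.
Qed.

Lemma rank_linkage_matrix : (L <= \rank linkage_matrix)%N.
Proof.
pose root_of (j : 'I_L) : 'I_C := enum_val j.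
have id_rows : rowsub root_of linkage_matrix = 1%:M.
  apply/matrixP => i j; rewrite !mxE; have [->|neq_ij] := eqVneq i j.
    by rewrite connect0.
  have -> // : linked (root_of j) (root_of i) = false.
  apply: contraNF neq_ij => linked_ji.
  have := enum_valP i; have := enum_valP j.
  rewrite !inE /= !andbT => /eqP root_j /eqP root_i.
  apply/eqP/enum_val_inj; rewrite -root_i -root_j.
  apply/(fingraph.rootP (sym_connect_sym (linked_sym (G:=G))))/connect1.
  by rewrite linked_sym.
by have := mxrankS (rowsub_sub root_of linkage_matrix); rewrite id_rows mxrank1.
Qed.

(* With deficiency zero the row space of the incidence matrix, which is the
   kernel of the linkage matrix, meets the kernel of the complex matrix
   trivially. *)
Lemma deficiency0_row_free : deficiency G F = 0 ->
  row_free (row_mx complex_matrix linkage_matrix).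
Proof.
move=> def0; have rank_Lk := rank_linkage_matrix.
have rank_DY : \rank (incidence_matrix *m complex_matrix) = (C - L)%N.
  by move: def0; rewrite /deficiency stoich_dim_incidence; move: (\rank _); lia.
have rank_D : \rank (incidence_matrix *m complex_matrix) = \rank incidence_matrix.
  have := mulmx0_rank_max incidence_linkage_matrix.
  by have := mxrankM_maxl incidence_matrix complex_matrix; lia.
have DY_inj : ((incidence_matrix :&: kermx complex_matrix)%MS == 0).
  exact/mxrank_injP.
have D_ker : (incidence_matrix <= kermx linkage_matrix)%MS.
  by rewrite sub_kermx incidence_linkage_matrix.
have ker_D : (kermx linkage_matrix <= incidence_matrix)%MS.
  rewrite -(mxrank_leqif_sup D_ker).2 mxrank_ker; apply/eqP.
  by have := rank_leq_col linkage_matrix; rewrite -rank_D rank_DY; lia.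
rewrite -kermx_eq0 -submx0 -(eqP DY_inj).
have := mulmx_ker (row_mx complex_matrix linkage_matrix).
rewrite mul_mx_row -row_mx0 => /eq_row_mx[kerY kerLk].
by rewrite sub_capmx sub_kermx kerY eqxx andbT (submx_trans _ ker_D) // sub_kermx kerLk.
Qed.

Lemma deficiency0_decomposition : deficiency G F = 0 -> forall w : 'I_C -> F,
  exists u : 'I_n -> F, exists2 g : 'I_C -> F,
    forall k, g (src G k) = g (tgt G k) &
    forall eta, w eta = \sum_i u i * (cpx G eta i)%:R + g eta.
Proof.
move=> def0 w; set A := row_mx complex_matrix linkage_matrix.
have A_full : row_full A^T by rewrite /row_full mxrank_tr; exact: deficiency0_row_free.
pose x := \row_eta w eta *m pinvmx A^T.
have xA : x *m A^T = \row_eta w eta := mulmxKpV (submx_full _ A_full).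
pose u := lsubmx x; pose a := rsubmx x.
exists (u 0); exists (fun eta => \sum_j a 0 j * (linked (enum_val j) eta)%:R).
  by move=> k; apply: eq_bigr => j _; rewrite linked_src_tgt.
move=> eta; have := congr1 (fun M : 'rV_C => M 0 eta) xA.
rewrite -(hsubmxK x) tr_row_mx mul_row_col !mxE => <-.
by congr (_ + _); apply: eq_bigr => i _; rewrite !mxE.
Qed.

End DeficiencyZeroDecomposition.

Section ComplexBalancedRates.
Variables (R : realType) (n : nat) (G : crn n).

(* [c := exp u] turns [b] into the monomials [c^eta] up to a factor constant on
   each linkage class, so balancing of [b] is complex balancing at [c]. *)
Lemma complex_balanced_of_log_decomposition (kappa : 'I_(nrxn G) -> R) b u g :
  (forall eta, 0 < b eta) -> balanced kappa b ->
  (forall k, g (src G k) = g (tgt G k)) ->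
  (forall eta, ln (b eta) = \sum_i u i * (cpx G eta i)%:R + g eta) ->
  complex_balanced_at kappa (fun i => expR (u i)).
Proof.
move=> b_gt0 bal_b g_const ln_b.
have monomE eta : monom (fun i => expR (u i)) (cpx G eta) = b eta / expR (g eta).
  rewrite /monom; under eq_bigr do rewrite -expRM_natl mulrC.
  rewrite -expR_sum (_ : \sum_i _ = ln (b eta) - g eta); last by rewrite ln_b addrK.
  by rewrite expRB lnK ?posrE.
move=> eta; under eq_bigr => k /eqP tgt_k do rewrite /srcv monomE g_const tgt_k mulrA.
rewrite -mulr_suml -/(inflow kappa b eta) bal_b monomE -mulr_suml /outflow_rate; ring.
Qed.

Lemma deficiency0_complex_balanced (kappa : 'I_(nrxn G) -> R) :
  positive kappa -> weakly_reversible G -> deficiency G R = 0 ->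
  complex_balanced kappa.
Proof.
move=> kappa_pos wr def0.
have [b b_gt0 bal_b] := weakly_reversible_balanced_gt0 kappa_pos wr.
have [u [g g_const ln_b]] := deficiency0_decomposition def0 (fun eta => ln (b eta)).
exists (fun i => expR (u i)); split=> [i|]; first exact: expR_gt0.
exact: complex_balanced_of_log_decomposition b_gt0 bal_b g_const ln_b.
Qed.

Lemma exists_V_cb_pos : weakly_reversible G ->
  exists kappa : 'I_(nrxn G) -> R, V_cb_pos kappa.
Proof.
move=> wr; have one_pos : positive (fun _ : 'I_(nrxn G) => 1 : R) by move=> k.
have [b b_gt0 bal_b] := weakly_reversible_balanced_gt0 one_pos wr.
exists (fun k => b (src G k)); split=> [k|]; first exact: b_gt0.
exists (fun _ => 1); split=> [//|eta].
have monom1 nu : monom (fun _ : 'I_n => 1 : R) nu = 1.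
  by apply: big1 => i _; rewrite expr1n.
under eq_bigr do rewrite monom1 mulr1; under [RHS]eq_bigr do rewrite monom1 mulr1.
have := bal_b eta; rewrite /inflow /outflow_rate mulr_sumr => bal_eta.
transitivity (\sum_(k | tgt G k == eta) 1 * b (src G k)).
  by apply: eq_bigr => k _; rewrite mul1r.
by rewrite bal_eta; apply: eq_bigr => k /eqP <-; rewrite mulr1.
Qed.

End ComplexBalancedRates.

Theorem lemma4p2 (R : realType) (n : nat) (G : crn n) (m : nat)
    (h : nat -> state n -> {mpoly R[nrxn G]}) :
  weakly_reversible G ->
  (forall l, (m <= l)%N -> irreducible_component G (fun x => Gamma l x)) ->
  (forall kappa : 'I_(nrxn G) -> R, positive kappa ->
     forall l, (m <= l)%N ->
       stationary_on kappa l
         (fun x => (h l x).@[kappa] / sum_Gamma l (fun y => (h l y).@[kappa]))) ->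
  [/\ exists kappa : 'I_(nrxn G) -> R, V_cb_pos kappa,
      forall kappa, V_cb_pos kappa -> V_G_pos m h kappa &
      deficiency G R = 0 ->
        (forall kappa, V_cb_pos kappa <-> V_G_pos m h kappa) /\
        (forall kappa, V_G_pos m h kappa <-> positive kappa)].
Proof.
move=> wr irrGamma stat_h; have cb_sub_VG := V_cb_pos_sub_V_G_pos irrGamma stat_h.
split=> [|//|def0]; first exact: exists_V_cb_pos.
have pos_cb (kappa : 'I_(nrxn G) -> R) : positive kappa -> V_cb_pos kappa.
  by move=> kappa_pos; split; last exact: deficiency0_complex_balanced.
split=> kappa; split.
- exact: cb_sub_VG.
- by case=> _ /pos_cb.
- by case.
- by move/pos_cb/cb_sub_VG.
Qed.
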